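(* Let $q\geq 2$ and let $G$ be a thin headless spider of order $q$ or a thick headless spider of order $q$. Then $\eta(G)=\lceil (q+1)/2\rceil$.
   Context: All graphs are finite, simple and undirected. A thin headless spider of order $q$ has vertices $u_1,\dots,u_q,v_1,\dots,v_q$, where $\{u_1,\dots,u_q\}$ is a clique, $\{v_1,\dots,v_q\}$ is a stable set, and the edges between the two sets are exactly $(u_i,v_i)$ for $i\in[q]$. A thick headless spider of order $q$ has the same vertices, clique and stable set, but the edges between the two sets are exactly $(u_i,v_j)$ for $i,j\in[q]$, $i\neq j$. For a vertex $v$, $N(v)$ is its set of neighbours. For a positive integer $k$, $[k]=\{1,\dots,k\}$. For a labeling $f:V(G)\to[k]$ and $S\subseteq V(G)$, $f(S)=\sum_{u\in S}f(u)$. A labeling $f:V(G)\to[k]$ is an additive $k$-coloring if $f(N(u))\neq f(N(v))$ for every edge $(u,v)$ of $G$. The additive chromatic number $\eta(G)$ is the least $k$ for which $G$ has an additive $k$-coloring. *)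

From mathcomp Require Import all_boot.
Set Implicit Arguments. Unset Strict Implicit. Unset Printing Implicit Defensive.

(* A simple graph on a finType T is given by its adjacency relation e
   (assumed symmetric and irreflexive; see the lemmas below for the spiders). *)

Definition nbhd (T : finType) (e : rel T) (v : T) : {set T} := [set u | e v u].

Definition fsum (T : finType) (f : T -> nat) (S : {set T}) : nat :=
  \sum_(u in S) f u.

Definition additive_coloring (T : finType) (e : rel T) (k : nat) (f : T -> nat) :=
  (forall v, 1 <= f v <= k) /\
  (forall u v, e u v -> fsum f (nbhd e u) <> fsum f (nbhd e v)).

Definition additive_chromatic_number (T : finType) (e : rel T) (n : nat) :=
  0 < n /\ (exists f, additive_coloring e n f) /\
  (forall k, 0 < k -> k < n -> ~ exists f, additive_coloring e k f).

(* Vertices: inl i = u_(i+1) (clique), inr i = v_(i+1) (stable set). *)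
Definition spider_vertex (q : nat) : finType := ('I_q + 'I_q)%type.

Definition thin_spider (q : nat) : rel (spider_vertex q) :=
  fun x y => match x, y with
  | inl i, inl j => i != j
  | inl i, inr j => i == j
  | inr i, inl j => i == j
  | inr _, inr _ => false
  end.

Definition thick_spider (q : nat) : rel (spider_vertex q) :=
  fun x y => match x, y with
  | inl i, inl j => i != j
  | inl i, inr j => i != j
  | inr i, inl j => i != j
  | inr _, inr _ => false
  end.
Arguments thin_spider q : clear implicits.
Arguments thick_spider q : clear implicits.

From mathcomp Require Import all_boot zify.

Set Implicit Arguments.
Unset Strict Implicit.
Unset Printing Implicit Defensive.

(* Write a_i = f(u_i), b_i = f(v_i) and A, B for their sums. In both spiders the
   neighbourhood sum of u_i is an affine function of b_i - a_i (thin) or of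
   a_i + b_i (thick), so along the clique these q quantities must be pairwise
   distinct; as they live in a window of 2k - 1 consecutive integers, q <= 2k - 1.
   Conversely, for k = ceil((q+1)/2) and 0 <= i < q, the labels a_i = max(1, i+2-k) with
   b_i = i+1 for i < k and 1 otherwise (thin), resp. b_i = min(k, i+1) (thick),
   make these quantities distinct, and the leg edges u_i v_j are separated because
   A, resp. B, is large. *)

Lemma leq_card_window (q m n : nat) (g : 'I_q -> nat) :
  injective g -> (forall i, m <= g i < m + n) -> q <= n.
Proof.
move=> g_inj g_win.
have := @uniq_leq_size _ (map g (enum 'I_q)) (iota m n).
rewrite size_map size_enum_ord size_iota; apply.
  by rewrite map_inj_uniq ?enum_uniq.
by move=> _ /mapP [i _ ->]; rewrite mem_iota.
Qed.

Lemma leq_term_sum_pos (q : nat) (g : 'I_q -> nat) (i : 'I_q) :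
  (forall j, 0 < g j) -> g i + (q - 1) <= \sum_(j < q) g j.
Proof.
move=> g_pos; rewrite (bigD1 i) //= leq_add2l.
apply: (@leq_trans (\sum_(j < q | j != i) 1)); last exact: leq_sum.
by rewrite sum1_card cardC1 card_ord subn1.
Qed.

Lemma sum_neq_addr (q : nat) (g : 'I_q -> nat) (i : 'I_q) :
  \sum_(j < q | i != j) g j + g i = \sum_(j < q) g j.
Proof.
by rewrite addnC [RHS](bigD1 i) //=; under [in RHS]eq_bigl => j do rewrite eq_sym.
Qed.

Lemma additive_coloring_clique_inj (T : finType) (e : rel T) (k : nat)
    (f : T -> nat) (q : nat) (x : 'I_q -> T) :
  additive_coloring e k f -> (forall i j, i != j -> e (x i) (x j)) ->
  injective (fun i => fsum f (nbhd e (x i))).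
Proof.
move=> [_ f_sep] x_clique i j eq_sum.
by case: (eqVneq i j) => // /x_clique /f_sep.
Qed.

Lemma additive_chromatic_number_intro (T : finType) (e : rel T) (n : nat) :
  0 < n -> (exists f, additive_coloring e n f) ->
  (forall k f, additive_coloring e k f -> n <= k) ->
  additive_chromatic_number e n.
Proof.
move=> n_gt0 col_n n_min; split=> //; split=> // k _ k_lt [f /n_min].
by rewrite leqNgt k_lt.
Qed.

Section SpiderNeighbourhoods.
Variables (q : nat) (f : spider_vertex q -> nat).
Notation u := (@inl 'I_q 'I_q).
Notation v := (@inr 'I_q 'I_q).

Definition clique_sum := \sum_(j < q) f (u j).
Definition stable_sum := \sum_(j < q) f (v j).

Lemma fsum_nbhd_spider (e : rel (spider_vertex q)) x :
  fsum f (nbhd e x) =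
  \sum_(j < q | e x (u j)) f (u j) + \sum_(j < q | e x (v j)) f (v j).
Proof.
by rewrite /fsum (big_sumType _ (mem (nbhd e x))) /nbhd;
  congr (_ + _); apply: eq_bigl => j; exact: in_set.
Qed.

Lemma fsum_thin_clique i :
  fsum f (nbhd (thin_spider q) (u i)) + f (u i) = clique_sum + f (v i).
Proof.
rewrite fsum_nbhd_spider /= [X in _ + X + _](big_pred1 i) => [|j]; last by rewrite /= eq_sym.
by rewrite addnAC sum_neq_addr.
Qed.

Lemma fsum_thin_leg i : fsum f (nbhd (thin_spider q) (v i)) = f (u i).
Proof.
rewrite fsum_nbhd_spider /= [X in X + _](big_pred1 i) => [|j]; last by rewrite /= eq_sym.
by rewrite big_pred0_eq addn0.
Qed.

Lemma fsum_thick_clique i :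
  fsum f (nbhd (thick_spider q) (u i)) + f (u i) + f (v i) =
  clique_sum + stable_sum.
Proof.
by rewrite fsum_nbhd_spider /= -addnA addnACA !sum_neq_addr.
Qed.

Lemma fsum_thick_leg i :
  fsum f (nbhd (thick_spider q) (v i)) + f (u i) = clique_sum.
Proof. by rewrite fsum_nbhd_spider /= big_pred0_eq addn0 sum_neq_addr. Qed.

End SpiderNeighbourhoods.

Arguments clique_sum {q}.
Arguments stable_sum {q}.

Section LowerBound.
Variables (q k : nat) (f : spider_vertex q -> nat).
Notation u := (@inl 'I_q 'I_q).
Notation v := (@inr 'I_q 'I_q).

Lemma thin_spider_coloring_size :
  additive_coloring (thin_spider q) k f -> q <= (2 * k).-1.
Proof.
move=> col; have [f_range _] := col.
pose s i := fsum f (nbhd (thin_spider q) (u i)).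
apply: (@leq_card_window q (clique_sum f).+1 _ (fun i => s i + k)).
  by move=> i j /addIn; apply: (additive_coloring_clique_inj (x := u) col).
move=> i; have := fsum_thin_clique f i.
have := f_range (u i); have := f_range (v i); rewrite /s; lia.
Qed.

Lemma thick_spider_coloring_size :
  additive_coloring (thick_spider q) k f -> q <= (2 * k).-1.
Proof.
move=> col; have [f_range _] := col.
pose s i := fsum f (nbhd (thick_spider q) (u i)).
apply: (@leq_card_window q (clique_sum f + stable_sum f) _ (fun i => s i + 2 * k)).
  by move=> i j /addIn; apply: (additive_coloring_clique_inj (x := u) col).
move=> i; have := fsum_thick_clique f i.
have := f_range (u i); have := f_range (v i); rewrite /s; lia.
Qed.

End LowerBound.

Section UpperBound.
Variables (q k : nat) (f : spider_vertex q -> nat).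
Hypothesis f_range : forall x, 1 <= f x <= k.
Notation u := (@inl 'I_q 'I_q).
Notation v := (@inr 'I_q 'I_q).

Lemma thin_spider_additive_coloring :
  (forall i j, i != j -> f (u i) + f (v j) != f (u j) + f (v i)) ->
  (forall i, 2 * f (u i) != clique_sum f + f (v i)) ->
  additive_coloring (thin_spider q) k f.
Proof.
move=> sep_clique sep_leg; split=> // [] [i|i] [j|j] //= adj.
- have := fsum_thin_clique f i; have := fsum_thin_clique f j.
  have := sep_clique i j adj; lia.
- move/eqP: adj => <-; rewrite fsum_thin_leg.
  have := fsum_thin_clique f i; have := sep_leg i; lia.
- move/eqP: adj => <-; rewrite fsum_thin_leg.
  have := fsum_thin_clique f i; have := sep_leg i; lia.
Qed.

Lemma thick_spider_additive_coloring :
  (forall i j, i != j -> f (u i) + f (v i) != f (u j) + f (v j)) ->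
  (forall i j, i != j -> f (u i) + f (v i) != stable_sum f + f (u j)) ->
  additive_coloring (thick_spider q) k f.
Proof.
move=> sep_clique sep_leg; split=> // [] [i|i] [j|j] //= adj.
- have := fsum_thick_clique f i; have := fsum_thick_clique f j.
  have := sep_clique i j adj; lia.
- have := fsum_thick_clique f i; have := fsum_thick_leg f j.
  have := sep_leg i j adj; lia.
- rewrite eq_sym in adj.
  have := fsum_thick_clique f j; have := fsum_thick_leg f i.
  have := sep_leg j i adj; lia.
Qed.

End UpperBound.

Definition thin_coloring (q k : nat) (x : spider_vertex q) : nat :=
  match x with inl i => (i.+1 - k).+1 | inr i => if i < k then i.+1 else 1 end.

Definition thick_coloring (q k : nat) (x : spider_vertex q) : nat :=
  match x with inl i => (i.+1 - k).+1 | inr i => minn k i.+1 end.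

Lemma thin_coloring_additive (q k : nat) :
  2 <= q -> q < 2 * k -> additive_coloring (thin_spider q) k (thin_coloring k).
Proof.
move=> q_ge2 q_lt.
apply: thin_spider_additive_coloring => [[i|i] /= | i j | i].
- have := ltn_ord i; lia.
- case: ifP; lia.
- rewrite -(inj_eq val_inj) /=; have := ltn_ord i; have := ltn_ord j.
  by case: ifP; case: ifP; lia.
- have := @leq_term_sum_pos q (fun j => thin_coloring k (inl j)) i (fun=> ltn0Sn _).
  rewrite /clique_sum /=; have := ltn_ord i; case: ifP; lia.
Qed.

Lemma thick_coloring_additive (q k : nat) :
  2 <= q -> q < 2 * k -> additive_coloring (thick_spider q) k (thick_coloring k).
Proof.
move=> q_ge2 q_lt.
have stable_sum_gt : q < stable_sum (thick_coloring (q := q) k).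
  have stable_pos (j : 'I_q) : 0 < thick_coloring k (inr j) by rewrite /=; lia.
  have := leq_term_sum_pos (Ordinal q_ge2) stable_pos; rewrite /stable_sum /=; lia.
apply: thick_spider_additive_coloring => [[i|i] /= | i j | i j _].
- have := ltn_ord i; lia.
- lia.
- rewrite -(inj_eq val_inj) /=; lia.
- have := ltn_ord i; move: stable_sum_gt => /=; lia.
Qed.

Theorem mainTheorem12 (q : nat) (hq : 2 <= q) :
  additive_chromatic_number (thin_spider q) ((q + 2) %/ 2) /\
  additive_chromatic_number (thick_spider q) ((q + 2) %/ 2).
Proof.
have q_lt : q < 2 * ((q + 2) %/ 2) by lia.
split; apply: additive_chromatic_number_intro; try lia.
- by exists (thin_coloring ((q + 2) %/ 2)); apply: thin_coloring_additive.
- by move=> k f /thin_spider_coloring_size; lia.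
- by exists (thick_coloring ((q + 2) %/ 2)); apply: thick_coloring_additive.
- by move=> k f /thick_spider_coloring_size; lia.
Qed.
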